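(* Let $g:\mathbb{R}\to\mathbb{R}$ be $\pi$-periodic. Let $m,n$ be positive integers, $p=\gcd(m,n)$, and $r,q$ positive integers with $m=pq$, $n=pr$. Let $\mu=\pi/n$ and define $h(x)=\prod_{j=0}^{r-1} g(x+jm\mu)$. Then for all $x\in\mathbb{R}$, $$\prod_{k=1}^{p} h\big(x+(k-1)\mu\big)=\prod_{i=0}^{n-1} g(x+i\mu)\quad\text{and}\quad \prod_{i=0}^{n-1} g(x+mi\mu)=h(x)^p.$$ *)

From Stdlib Require Import Reals Arith PeanoNat.
Open Scope R_scope.

Fixpoint prod_R (f : nat -> R) (n : nat) : R :=
  match n with
  | O => 1
  | S k => prod_R f k * f k
  end.

(** Write [m = p q], [n = p r], so that [gcd q r = 1] and multiplication by
    [q] permutes the residues modulo [r].  Since [i |-> g (x + i mu)] is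
    [n]-periodic, the stride-[m] product [h (x + k mu)] equals the stride-[p]
    product starting at [k], and the [p] stride-[p] products for [k < p]
    together cover [0, ..., n-1].  Likewise [i |-> g (x + m i mu)] is
    [r]-periodic, so its product over [n = r p] indices is [p] copies of the
    product over [r]. *)

From Stdlib Require Import Reals Arith PeanoNat.
From Stdlib Require Import List Permutation Lia.
Open Scope R_scope.

Lemma prod_R_ext (F G : nat -> R) n :
  (forall i, (i < n)%nat -> F i = G i) -> prod_R F n = prod_R G n.
Proof. induction n; intros H; simpl; [reflexivity|]. rewrite IHn, H; auto. Qed.

Lemma prod_R_mul (F G : nat -> R) n :
  prod_R (fun i => F i * G i) n = prod_R F n * prod_R G n.
Proof. induction n; simpl; [ring | rewrite IHn; ring]. Qed.

Lemma prod_R_const c n : prod_R (fun _ => c) n = c ^ n.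
Proof. induction n; simpl; [ring | rewrite IHn; ring]. Qed.

Lemma prod_R_add (F : nat -> R) a b :
  prod_R F (a + b) = prod_R F a * prod_R (fun i => F (a + i)%nat) b.
Proof.
  induction b; simpl.
  - rewrite Nat.add_0_r; ring.
  - rewrite Nat.add_succ_r; simpl; rewrite IHb; ring.
Qed.

Lemma prod_R_strided (F : nat -> R) a b :
  prod_R (fun k => prod_R (fun j => F (k + a * j)%nat) b) a = prod_R F (a * b).
Proof.
  induction b.
  - rewrite Nat.mul_0_r; simpl. rewrite prod_R_const, pow1; reflexivity.
  - rewrite Nat.mul_succ_r, prod_R_add, <- IHb; simpl.
    rewrite prod_R_mul. f_equal.
    apply prod_R_ext; intros i _; f_equal; lia.
Qed.

Lemma periodic_nat (F : nat -> R) r :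
  (forall i, F (i + r)%nat = F i) -> forall i t, F (i + r * t)%nat = F i.
Proof.
  intros HF i t; induction t.
  - f_equal; lia.
  - rewrite <- IHt, <- (HF (i + r * t)%nat); f_equal; lia.
Qed.

Lemma prod_R_periodic_pow (F : nat -> R) r p :
  (forall i, F (i + r)%nat = F i) -> prod_R F (r * p) = prod_R F r ^ p.
Proof.
  intros HF; induction p; simpl.
  - rewrite Nat.mul_0_r; reflexivity.
  - rewrite Nat.mul_succ_r, prod_R_add, IHp.
    rewrite (prod_R_ext (fun i => F (r * p + i)%nat) F); [ring|].
    intros i _; rewrite Nat.add_comm; apply (periodic_nat F r HF).
Qed.

Lemma fold_right_Rmult_perm (l l' : list R) :
  Permutation l l' -> fold_right Rmult 1 l = fold_right Rmult 1 l'.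
Proof. induction 1; simpl; try congruence; ring. Qed.

Lemma prod_R_as_list (F : nat -> R) n :
  prod_R F n = fold_right Rmult 1 (map F (seq 0 n)).
Proof.
  induction n; [reflexivity|].
  rewrite seq_S, map_app, fold_right_app; simpl; rewrite IHn.
  clear IHn; induction (map F (seq 0 n)) as [|a l IHl]; simpl; [ring | rewrite <- IHl; ring].
Qed.

Lemma prod_R_reindex (F : nat -> R) (s : nat -> nat) n :
  (forall i, (i < n)%nat -> (s i < n)%nat) ->
  (forall i j, (i < n)%nat -> (j < n)%nat -> s i = s j -> i = j) ->
  prod_R (fun i => F (s i)) n = prod_R F n.
Proof.
  intros Hs Hinj.
  rewrite !prod_R_as_list, <- (map_map s F).
  apply fold_right_Rmult_perm, Permutation_map, NoDup_Permutation_bis.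
  - apply NoDup_map_NoDup_ForallPairs; [|apply seq_NoDup].
    intros i j Hi Hj; apply in_seq in Hi; apply in_seq in Hj; apply Hinj; lia.
  - rewrite length_map; lia.
  - intros y Hy; apply in_map_iff in Hy; destruct Hy as [i [<- Hi]].
    apply in_seq in Hi; apply in_seq; split; [lia | simpl; apply Hs; lia].
Qed.

Lemma divide_sub_of_mod_eq x y r :
  (x <= y)%nat -> x mod r = y mod r -> Nat.divide r (y - x).
Proof.
  intros Hxy E; exists (y / r - x / r)%nat.
  pose proof (Nat.div_mod_eq x r); pose proof (Nat.div_mod_eq y r).
  rewrite Nat.mul_sub_distr_r; nia.
Qed.

Lemma mul_mod_injective q r a b :
  Nat.gcd q r = 1%nat -> (a < r)%nat -> (b < r)%nat ->
  (a * q) mod r = (b * q) mod r -> a = b.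
Proof.
  intros Hqr.
  assert (key : forall x y, (x <= y)%nat -> (y < r)%nat ->
            (x * q) mod r = (y * q) mod r -> x = y).
  { intros x y Hxy Hy E.
    apply divide_sub_of_mod_eq in E; [|nia].
    rewrite <- Nat.mul_sub_distr_r, Nat.mul_comm in E.
    apply Nat.gauss in E; [|rewrite Nat.gcd_comm; exact Hqr].
    destruct E as [[|s] Hs]; lia. }
  intros Ha Hb E; destruct (Nat.le_ge_cases a b);
    [apply key | symmetry; apply key]; auto.
Qed.

Lemma prod_R_coprime_stride (F : nat -> R) p q r k :
  (forall i, F (i + p * r)%nat = F i) -> Nat.gcd q r = 1%nat -> (0 < r)%nat ->
  prod_R (fun j => F (k + j * (p * q))%nat) r = prod_R (fun j => F (k + p * j)%nat) r.
Proof.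
  intros HF Hqr Hr.
  rewrite <- (prod_R_reindex (fun j => F (k + p * j)%nat) (fun j => (j * q) mod r)).
  - apply prod_R_ext; intros j _.
    rewrite <- (periodic_nat F (p * r) HF (k + p * ((j * q) mod r)) ((j * q) / r)).
    f_equal; pose proof (Nat.div_mod_eq (j * q) r) as E.
    revert E; generalize ((j * q) mod r)%nat ((j * q) / r)%nat; intros s t E.
    replace (j * (p * q))%nat with (p * (j * q))%nat by ring; rewrite E; ring.
  - intros i _; apply Nat.mod_upper_bound; lia.
  - intros i j Hi Hj; apply mul_mod_injective; assumption.
Qed.

Theorem lemma4p1 (g : R -> R) (m n p q r : nat)
  (hg : forall x, g (x + PI) = g x)
  (hm : (0 < m)%nat) (hn : (0 < n)%nat)
  (hp : p = Nat.gcd m n) (hq : (0 < q)%nat) (hr : (0 < r)%nat)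
  (hmq : m = (p * q)%nat) (hnr : n = (p * r)%nat) :
  let mu := PI / INR n in
  let h := fun x => prod_R (fun j => g (x + INR j * INR m * mu)) r in
  forall x : R,
    prod_R (fun k => h (x + INR k * mu)) p = prod_R (fun i => g (x + INR i * mu)) n
    /\ prod_R (fun i => g (x + INR m * INR i * mu)) n = h x ^ p.
Proof.
  intros mu h x.
  set (G := fun i : nat => g (x + INR i * mu)).
  assert (HG : forall i, G (i + n)%nat = G i).
  { intros i; unfold G; rewrite plus_INR.
    replace (x + (INR i + INR n) * mu) with (x + INR i * mu + PI)
      by (unfold mu; field; apply not_0_INR; lia).
    apply hg. }
  assert (Hqr : Nat.gcd q r = 1%nat).
  { rewrite hmq, hnr, Nat.gcd_mul_mono_l in hp.
    destruct (Nat.gcd q r) as [|[|k]]; nia. }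
  split.
  - rewrite hnr, <- prod_R_strided.
    apply prod_R_ext; intros k _.
    rewrite <- (prod_R_coprime_stride G p q r k); [| rewrite <- hnr; exact HG | exact Hqr | exact hr].
    apply prod_R_ext; intros j _; unfold G.
    rewrite <- hmq, plus_INR, mult_INR; f_equal; ring.
  - rewrite (prod_R_ext _ (fun i => G (m * i)%nat));
      [| intros i _; unfold G; rewrite mult_INR; f_equal; ring].
    replace n with (r * p)%nat by lia.
    rewrite prod_R_periodic_pow.
    + f_equal; apply prod_R_ext; intros j _; unfold G.
      rewrite mult_INR; f_equal; ring.
    + intros i; replace (m * (i + r))%nat with (m * i + n * q)%nat by lia.
      apply (periodic_nat G n HG).
Qed.
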